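(* Let $\mu,P$ be Borel probability measures on $\mathbb{R}^d$ absolutely continuous w.r.t. Lebesgue measure, and let $u\in\mathbb{R}^d$ with $\mathrm{TD}(u;\mu)>0$. Then for every $\varepsilon\in[0,\mathrm{TD}(u;\mu))$ there exists $R>0$ such that $$\{x\in\partial\varphi_{\mu\to\nu}(u):\ \varphi_{\mu\to\nu}\in\Gamma_\varepsilon(P)\}\subset R\,\mathbb{B}.$$
   Context: $\mathbb{B}=\{x:\|x\|\leq1\}$; $\mathrm{TD}(u;\mu)=\min_{v\in\mathcal{S}^{d-1}}\mu(\{z:\langle v,z-u\rangle\geq0\})$; $\partial\psi(u)=\{x:\psi(z)\geq\psi(u)+\langle x,z-u\rangle\ \forall z\}$. $\mathcal{Q}_\varepsilon(P)=\{P+\varepsilon(Q-P):Q\text{ a Borel probability measure}\}\cap\{\text{probability measures absolutely continuous w.r.t. Lebesgue}\}$, and $\Gamma_\varepsilon(P)$ is the set of lower semicontinuous convex functions $\varphi_{\mu\to\nu}$ whose gradient pushes $\mu$ forward to some $\nu\in\mathcal{Q}_\varepsilon(P)$. *)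

From HB Require Import structures.
From mathcomp Require Import all_boot all_order all_algebra.
From mathcomp Require Import all_classical all_reals all_analysis.
Import Order.TTheory GRing.Theory Num.Theory.
Import numFieldNormedType.Exports.

Set Implicit Arguments.
Unset Strict Implicit.
Unset Printing Implicit Defensive.

Local Open Scope classical_set_scope.
Local Open Scope ring_scope.

(* R^d = row vectors 'rV[R]_d with the Borel sigma-algebra (generated by the
   open sets of the product topology). *)
Notation Rd R d := (g_sigma_algebraType (@open 'rV[R]_d)).

Definition dotv (R : realType) (d : nat) (x y : 'rV[R]_d) : R :=
  \sum_(i < d) x ord0 i * y ord0 i.

Definition enorm (R : realType) (d : nat) (x : 'rV[R]_d) : R :=
  Num.sqrt (dotv x x).

Definition box (R : realType) (d : nat) (a b : 'rV[R]_d) : set 'rV[R]_d :=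
  [set x | forall i : 'I_d, a ord0 i <= x ord0 i <= b ord0 i].

Definition box_vol (R : realType) (d : nat) (a b : 'rV[R]_d) : R :=
  \prod_(i < d) (b ord0 i - a ord0 i).

Definition lebesgue_null (R : realType) (d : nat) (A : set 'rV[R]_d) : Prop :=
  forall e : R, 0 < e ->
    exists a b : nat -> 'rV[R]_d,
      (forall n (i : 'I_d), a n ord0 i <= b n ord0 i) /\
      A `<=` \bigcup_n box (a n) (b n) /\
      (forall N : nat, \sum_(n < N) box_vol (a n) (b n) <= e).

Definition abs_cont (R : realType) (d : nat) (mu : set (Rd R d) -> \bar R) : Prop :=
  forall A : set (Rd R d), measurable A -> lebesgue_null A -> mu A = 0%E.

(* Tukey depth TD(u; mu) = min_{v in S^{d-1}} mu {z | <v, z - u> >= 0}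
   (written as an infimum; it is attained). *)
Definition TD (R : realType) (d : nat) (mu : set (Rd R d) -> \bar R)
    (u : 'rV[R]_d) : \bar R :=
  ereal_inf [set mu [set z | 0 <= dotv v (z - u)] | v in [set v | enorm v = 1]].

Definition subdiff (R : realType) (d : nat) (psi : 'rV[R]_d -> \bar R)
    (u : 'rV[R]_d) : set 'rV[R]_d :=
  [set x | forall z, (psi u + (dotv x (z - u)%R)%:E <= psi z)%E].

Definition convex_ext (R : realType) (d : nat) (psi : 'rV[R]_d -> \bar R) : Prop :=
  (forall x : 'rV[R]_d, psi x != -oo%E) /\
  forall (x y : 'rV[R]_d) (t : R), 0 < t < 1 ->
    (psi (t *: x + (1 - t) *: y)%R <= t%:E * psi x + (1 - t)%:E * psi y)%E.

Definition lsc_ext (R : realType) (d : nat) (psi : 'rV[R]_d -> \bar R) : Prop :=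
  forall (x : 'rV[R]_d) (a : R), (a%:E < psi x)%E ->
    \forall y \near x, (a%:E < psi y)%E.

Definition has_gradient (R : realType) (d : nat) (psi : 'rV[R]_d -> \bar R)
    (x g : 'rV[R]_d) : Prop :=
  psi x \is a fin_num /\
  forall e : R, 0 < e -> exists del : R, 0 < del /\
    forall h : 'rV[R]_d, enorm h < del ->
      exists r : R, psi (x + h) = r%:E /\
        `| r - fine (psi x) - dotv g h | <= e * enorm h.

(* The gradient of psi pushes mu forward to nu: psi is differentiable
   mu-a.e., its gradient agrees mu-a.e. with a Borel map T, and T#mu = nu. *)
Definition grad_pushforward (R : realType) (d : nat)
    (mu nu : set (Rd R d) -> \bar R) (psi : 'rV[R]_d -> \bar R) : Prop :=
  exists T : Rd R d -> Rd R d,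
    measurable_fun [set: Rd R d] T /\
    (exists N : set (Rd R d), measurable N /\ mu N = 0%E /\
       forall x, ~ N x -> has_gradient psi x (T x)) /\
    (forall B : set (Rd R d), measurable B -> nu B = mu (T @^-1` B)).

Definition in_Qeps (R : realType) (d : nat) (eps : R)
    (P nu : set (Rd R d) -> \bar R) : Prop :=
  abs_cont nu /\
  exists Q : probability (Rd R d) R,
    forall A : set (Rd R d), measurable A ->
      nu A = (P A + eps%:E * (Q A - P A))%E.

Definition in_Gamma (R : realType) (d : nat) (eps : R)
    (mu P : set (Rd R d) -> \bar R) (psi : 'rV[R]_d -> \bar R) : Prop :=
  convex_ext psi /\ lsc_ext psi /\
  exists nu : probability (Rd R d) R,
    in_Qeps eps P nu /\ grad_pushforward mu nu psi.

From HB Require Import structures.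
From mathcomp Require Import all_boot all_order all_algebra.
From mathcomp Require Import all_classical all_reals all_analysis.
From mathcomp Require Import ring lra.
Import Order.TTheory GRing.Theory Num.Theory.
Import numFieldNormedType.Exports.

Set Implicit Arguments.
Unset Strict Implicit.
Unset Printing Implicit Defensive.

Local Open Scope classical_set_scope.
Local Open Scope ring_scope.

(* Let x be a subgradient at u of a convex potential whose gradient T pushes mu to
   nu in Q_eps(P).  Monotonicity of the subdifferential gives <T z, z - u> >= <x, z - u>
   wherever T z is a gradient.  Since TD(u; mu) > eps, every closed halfspace through u
   has mu-mass at least eps + 3 eta; as hyperplanes are Lebesgue-null and the unit sphere
   is compact, there are K, del > 0 such that the slabs
   {z in u + [-K, K]^d | <v, z - u> >= del} keep mu-mass > eps + 2 eta for every unit v.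
   For v = x / |x|, T z satisfies <T z, z - u> >= del |x| on that slab, so for |x| large
   T z leaves a cube [-Rc, Rc]^d of P-mass > 1 - eta.  Then nu gives mass > eps + 2 eta
   to the complement of the cube, whereas nu = (1 - eps) P + eps Q gives it < eta + eps. *)

Section inner_product.
Variables (R : realType) (d : nat).
Implicit Types (x y z : 'rV[R]_d) (t : R).

Lemma dotvC x y : dotv x y = dotv y x.
Proof. by apply: eq_bigr => i _; rewrite mulrC. Qed.

Lemma dotvDr x y z : dotv x (y + z) = dotv x y + dotv x z.
Proof. by rewrite /dotv -big_split; apply: eq_bigr => i _; rewrite mxE mulrDr. Qed.

Lemma dotvNr x y : dotv x (- y) = - dotv x y.
Proof. by rewrite /dotv -sumrN; apply: eq_bigr => i _; rewrite mxE mulrN. Qed.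

Lemma dotvZr x y t : dotv x (t *: y) = t * dotv x y.
Proof. by rewrite /dotv mulr_sumr; apply: eq_bigr => i _; rewrite mxE mulrCA. Qed.

Lemma dotvZl x y t : dotv (t *: x) y = t * dotv x y.
Proof. by rewrite dotvC dotvZr dotvC. Qed.

Lemma dotvBl x y z : dotv (x - y) z = dotv x z - dotv y z.
Proof. by rewrite dotvC dotvDr dotvNr !(dotvC z). Qed.

Lemma dotvv_ge0 x : 0 <= dotv x x.
Proof. by apply: sumr_ge0 => i _; rewrite -expr2 sqr_ge0. Qed.

Lemma dotvv x : dotv x x = enorm x ^+ 2.
Proof. by rewrite sqr_sqrtr ?dotvv_ge0. Qed.

Lemma enorm_ge0 x : 0 <= enorm x.
Proof. exact: sqrtr_ge0. Qed.

Lemma enormZ x t : enorm (t *: x) = `|t| * enorm x.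
Proof. by rewrite /enorm dotvZl dotvZr mulrA -expr2 sqrtrM ?sqr_ge0 // sqrtr_sqr. Qed.

Lemma enorm_eq1 x : (enorm x = 1) <-> (dotv x x = 1).
Proof.
rewrite dotvv; split=> [-> | /eqP]; first by rewrite expr1n.
by rewrite sqrf_eq1 => /orP[/eqP // | /eqP x1]; have := enorm_ge0 x; rewrite x1; lra.
Qed.

Lemma normr_dotv_le x y (a b : R) :
  (forall i, `|x ord0 i| <= a) -> (forall i, `|y ord0 i| <= b) ->
  `|dotv x y| <= d%:R * (a * b).
Proof.
move=> xa yb; apply: le_trans (ler_norm_sum _ _ _) _.
apply: le_trans (_ : \sum_(i < d) a * b <= _).
  by apply: ler_sum => i _; rewrite normrM ler_pM.
by rewrite sumr_const card_ord mulr_natl.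
Qed.

Lemma continuous_dotv (T : topologicalType) (f g : T -> 'rV[R]_d) :
  continuous f -> continuous g -> continuous (fun p => dotv (f p) (g p)).
Proof.
move=> cf cg; apply: continuous_big; first exact: add_continuous.
move=> i _ p; apply: cvgM.
- exact: (continuous_comp (cf p) (@coord_continuous _ _ _ ord0 i (f p))).
- exact: (continuous_comp (cg p) (@coord_continuous _ _ _ ord0 i (g p))).
Qed.

End inner_product.

Section convex_gradient.
Variables (R : realType) (d : nat) (psi : 'rV[R]_d -> \bar R).

Lemma has_gradient_step z g h e : has_gradient psi z g -> 0 < e ->
  exists t, 0 < t < 1 /\ exists r, psi (z + t *: h) = r%:E /\
    fine (psi z) + t * dotv g h - t * e <= r.
Proof.
move=> [_ grad] e0; have h0 := enorm_ge0 h.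
have [del [del0 near_z]] := grad (e / (enorm h + 1)) (divr_gt0 e0 (ltr_wpDl h0 ltr01)).
set t := del / (2 * (enorm h + del)).
have t0 : 0 < t by rewrite divr_gt0 // mulr_gt0 // ltr_wpDl.
have t1 : t < 1 by rewrite ltr_pdivrMr ?mulr_gt0 ?ltr_wpDl //; lra.
have th : t * enorm h < del.
  by rewrite /t mulrAC ltr_pdivrMr ?mulr_gt0 ?ltr_wpDl // ltr_pM2l //; lra.
have [|r [Er Hr]] := near_z (t *: h); first by rewrite enormZ (gtr0_norm t0).
exists t; split; first by rewrite t0 t1.
exists r; split => //; move: Hr; rewrite dotvZr enormZ (gtr0_norm t0) ler_norml.
case/andP=> + _; suff : e / (enorm h + 1) * (t * enorm h) <= t * e by lra.
rewrite mulrCA ler_pM2l // mulrAC ler_pdivrMr ?ltr_wpDl //; nra.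
Qed.

Lemma convex_gradient_subdiff z g :
  convex_ext psi -> has_gradient psi z g -> subdiff psi z g.
Proof.
move=> [psiNoo cvx] [zfin grad] y; rewrite -(fineK zfin).
case Ey: (psi y) (psiNoo y) => [b| |] // _; last by rewrite leey.
rewrite -EFinD lee_fin; apply/ler_addgt0Pr => e e0.
have [t [/andP[t0 t1] [r [Er Hr]]]] := has_gradient_step (y - z) (conj zfin grad) e0.
have := cvx y z t; rewrite t0 t1 => /(_ isT).
have -> : t *: y + (1 - t) *: z = z + t *: (y - z) by apply/rowP => i; rewrite !mxE; ring.
rewrite Er Ey -(fineK zfin) -!EFinM -EFinD lee_fin => conv.
rewrite -(ler_pM2l t0); lra.
Qed.

Lemma subdiff_le_gradient u x z g : convex_ext psi ->
  subdiff psi u x -> has_gradient psi z g -> dotv x (z - u) <= dotv g (z - u).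
Proof.
move=> cvx xu gz; have gsub := convex_gradient_subdiff cvx gz u.
have [zfin _] := gz; have := xu z; move: gsub; rewrite -(fineK zfin).
case: (psi u) (cvx.1 u) => [a| |] // _; rewrite -!EFinD !lee_fin.
by rewrite -opprB dotvNr; lra.
Qed.

End convex_gradient.

Local Notation pr mu A := (fine (mu A)).

Section real_valued_probability.
Context (dm : measure_display) (T : measurableType dm) (R : realType).
Variable mu : probability T R.
Implicit Types A B : set T.

Lemma probabilityE A : measurable A -> mu A = (pr mu A)%:E.
Proof. by move=> mA; rewrite fineK // fin_num_measure. Qed.

Lemma pr_ge0 A : measurable A -> 0 <= pr mu A.
Proof. by move=> mA; rewrite -lee_fin -probabilityE. Qed.

Lemma pr_le1 A : measurable A -> pr mu A <= 1.
Proof. by move=> mA; rewrite -lee_fin -probabilityE // probability_le1. Qed.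

Lemma le_pr A B : measurable A -> measurable B -> A `<=` B -> pr mu A <= pr mu B.
Proof. by move=> mA mB AB; rewrite -lee_fin -!probabilityE // le_measure // inE. Qed.

Lemma pr_setU_le A B : measurable A -> measurable B ->
  pr mu (A `|` B) <= pr mu A + pr mu B.
Proof.
move=> mA mB; rewrite -lee_fin EFinD -!probabilityE //; last exact: measurableU.
exact: measureU2.
Qed.

Lemma pr_setC A : measurable A -> pr mu (~` A) = 1 - pr mu A.
Proof. by move=> mA; rewrite probability_setC // probabilityE. Qed.

Lemma pr_bigcup_gt (F : nat -> set T) b : (forall n, measurable (F n)) ->
  nondecreasing_seq F -> b < pr mu (\bigcup_n F n) -> exists n, b < pr mu (F n).
Proof.
move=> mF ndF; apply: contraPP => /forallNP Fb.
have mU : measurable (\bigcup_n F n) by exact: bigcupT_measurable.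
apply/negP; rewrite -leNgt -lee_fin -probabilityE //.
apply: cvge_to_le (nondecreasing_cvg_mu mF mU ndF) _; apply: nearW => n /=.
by rewrite probabilityE // lee_fin leNgt; apply/negP/Fb.
Qed.

End real_valued_probability.

Definition cube (R : realType) (d : nat) (c : 'rV[R]_d) (K : R) : set 'rV[R]_d :=
  [set z | forall i, `|z ord0 i - c ord0 i| <= K].

Definition halfspace (R : realType) (d : nat) (w u : 'rV[R]_d) (c : R) : set 'rV[R]_d :=
  [set z | c <= dotv w (z - u)].

Section closed_sets.
Variables (R : realType) (d : nat).
Implicit Types (c u w : 'rV[R]_d).

Lemma continuous_dotv_shift w u : continuous (fun z : 'rV[R]_d => dotv w (z - u)).
Proof.
apply: continuous_dotv; first exact: cst_continuous.
by move=> z; apply: continuousB; [exact: cvg_id | exact: cst_continuous].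
Qed.

Lemma closed_cube c K : closed (cube c K).
Proof.
have -> : cube c K =
    \bigcap_i ((fun z : 'rV[R]_d => `|z ord0 i - c ord0 i|) @^-1` [set r | r <= K]).
  by apply/seteqP; split=> z /= zK i => [_|]; apply: zK.
apply: closed_bigI => i _; apply: preimage_closed; last exact: closed_le.
move=> z _; have cz : {for z, continuous (fun z : 'rV[R]_d => z ord0 i - c ord0 i)}.
  by apply: continuousB; [exact: coord_continuous | exact: cst_continuous].
exact: cvg_norm cz.
Qed.

Lemma closed_halfspace w u b : closed (halfspace w u b).
Proof.
rewrite (_ : halfspace w u b = (fun z => dotv w (z - u)) @^-1` [set r | b <= r]) //.
apply: preimage_closed; last exact: closed_ge.
by move=> z _; exact: continuous_dotv_shift.
Qed.

Lemma closed_hyperplane w u : closed [set z : 'rV[R]_d | dotv w (z - u) = 0].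
Proof.
rewrite (_ : [set z | _] = (fun z => dotv w (z - u)) @^-1` [set r | r = 0]) //.
apply: preimage_closed; last exact: closed_eq.
by move=> z _; exact: continuous_dotv_shift.
Qed.

Lemma compact_unit_sphere : compact [set v : 'rV[R]_d | dotv v v = 1].
Proof.
apply: bounded_closed_compact.
  exists 1; split => // M M1 v /= vv1.
  rewrite [`|v|]/Num.norm /= mx_normrE; apply: bigmax_le => [|[a i] _ /=]; first lra.
  rewrite (ord1 a); apply: le_trans (ltW M1); rewrite -(ler_pXn2r (n := 2)) ?nnegrE //.
  rewrite expr1n -vv1 /dotv (bigD1 i) //= real_normK ?num_real // -expr2 lerDl.
  by apply: sumr_ge0 => k _; rewrite -expr2 sqr_ge0.
rewrite (_ : [set v | _] = (fun v => dotv v v) @^-1` [set r | r = 1]) //.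
apply: preimage_closed; last exact: closed_eq.
by move=> v _; apply: continuous_dotv => ?; exact: cvg_id.
Qed.

Lemma closed_measurable (A : set 'rV[R]_d) : closed A -> measurable (A : set (Rd R d)).
Proof.
move=> cA; rewrite -[A]setCK; apply: measurableC.
by apply: sub_sigma_algebra; exact: closed_openC.
Qed.

End closed_sets.

Lemma sum_ord_le_of_vanishing (R : realType) (g : nat -> R) m n :
  (forall k, 0 <= g k) -> (forall k, (m <= k)%N -> g k = 0) ->
  \sum_(k < n) g k <= \sum_(k < m) g k.
Proof.
move=> g0 gm; rewrite -!(big_mkord xpredT); case: (leqP n m) => nm.
  by rewrite (big_cat_nat (leq0n n) nm) /= lerDl sumr_ge0.
rewrite (big_cat_nat (leq0n m) (ltnW nm)) /= gerDl big_nat_cond big1 //.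
by move=> k /andP[/andP[mk _] _]; exact: gm.
Qed.

Lemma grid_cell (R : realType) (lo len x : R) n : 0 < len -> lo <= x <= lo + len ->
  exists c : 'I_n.+1,
    lo + c%:R * (len / n.+1%:R) <= x <= lo + c.+1%:R * (len / n.+1%:R).
Proof.
move=> len0 /andP[lox xhi]; set s := len / n.+1%:R.
have s0 : 0 < s by rewrite divr_gt0.
set y := (x - lo) / s.
have xE : x = lo + y * s by rewrite /y divfK ?gt_eqF //; ring.
have y0 : 0 <= y by rewrite divr_ge0 ?subr_ge0 // ltW.
have yn : y <= n.+1%:R by rewrite ler_pdivrMr // /s mulrC divfK ?pnatr_eq0 //; lra.
suff [c /andP[cy yc]] : exists c : 'I_n.+1, c%:R <= y <= c.+1%:R.
  by exists c; rewrite xE lerD2l ler_pM2r // cy lerD2l ler_pM2r.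
case: (leqP (Num.Def.truncn y) n) => [tn|nt].
  exists (Ordinal (tn : (Num.Def.truncn y < n.+1)%N)).
  by have /andP[-> /ltW] := truncn_itv y0.
exists ord_max; rewrite yn andbT; apply: le_trans (_ : n.+1%:R <= y).
  by rewrite ler_nat leqnSn.
by rewrite -truncn_ge_nat.
Qed.

Section finite_box_cover.
Variables (R : realType) (d : nat).
(* The padding boxes [0, 0] have volume 0 only when d > 0: for d = 0 box_vol is an
   empty product. *)
Hypothesis d_gt0 : (0 < d)%N.

Lemma box_vol_ge0 (a b : 'rV[R]_d) : (forall i, a ord0 i <= b ord0 i) -> 0 <= box_vol a b.
Proof. by move=> ab; apply: prodr_ge0 => i _; rewrite subr_ge0. Qed.

Lemma box_vol00 : box_vol (0 : 'rV[R]_d) 0 = 0.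
Proof. by rewrite /box_vol (bigD1 (Ordinal d_gt0)) //= !mxE subrr mul0r. Qed.

Lemma finite_box_cover_seq (I : finType) (a b : I -> 'rV[R]_d) (A : set 'rV[R]_d) e :
  (forall k i, a k ord0 i <= b k ord0 i) -> A `<=` \bigcup_k box (a k) (b k) ->
  \sum_k box_vol (a k) (b k) <= e ->
  exists a' b' : nat -> 'rV[R]_d,
    (forall n i, a' n ord0 i <= b' n ord0 i) /\
    A `<=` \bigcup_n box (a' n) (b' n) /\
    (forall N, \sum_(n < N) box_vol (a' n) (b' n) <= e).
Proof.
move=> ab Acov vol_le.
pose enum_seq (f : I -> 'rV[R]_d) n :=
  if (insub n : option 'I_#|I|) is Some k then f (enum_val k) else 0.
exists (enum_seq a), (enum_seq b); split; [|split].
- by move=> n i; rewrite /enum_seq; case: insub => [k|]; rewrite ?mxE.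
- move=> z /Acov[k _ zk]; exists (enum_rank k : nat) => //.
  by rewrite /enum_seq valK enum_rankK.
- move=> N; pose g n := box_vol (enum_seq a n) (enum_seq b n).
  apply: le_trans (sum_ord_le_of_vanishing (g := g) (m := #|I|) N _ _) _.
  + move=> n; rewrite /g /enum_seq.
    by case: (insub n : option 'I_#|I|) => [k|]; rewrite ?box_vol00 ?box_vol_ge0.
  + by move=> n In; rewrite /g /enum_seq insubN -?leqNgt // box_vol00.
  suff -> : \sum_(n < #|I|) g n = \sum_k box_vol (a k) (b k) by [].
  rewrite [RHS](big_enum_val (A := predT)); apply: eq_bigr => k _.
  by rewrite /g /enum_seq valK.
Qed.

End finite_box_cover.

Section hyperplane_null.
Variables (R : realType) (d : nat) (u w : 'rV[R]_d) (K : R) (j : 'I_d).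
Hypotheses (K0 : 0 < K) (wj0 : w ord0 j != 0).

Let L : R := (\sum_i `|w ord0 i|) / `|w ord0 j|.

Let C : R := \prod_(i | i != j) (2 * K).

Let L_gt0 : 0 < L.
Proof.
rewrite divr_gt0 ?normr_gt0 //; apply: lt_le_trans (_ : `|w ord0 j| <= _).
  by rewrite normr_gt0.
by rewrite (bigD1 j) //= lerDl sumr_ge0.
Qed.

Section grid.
Variable n : nat.
Local Notation grid := {ffun 'I_d -> 'I_n.+1}.

(* Over the cell k of the grid of side s of the cube in the coordinates i != j, the
   hyperplane is a graph z_j = f(z_i, i != j) staying within L * s of center k, its value at
   the lower corner of the cell.  The cell is thickened by L * s on both sides in direction
   j, and the index k j subdivides this thickness, so that all boxes have equal volume. *)
Let s : R := 2 * K / n.+1%:R.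
Let center (k : grid) : R :=
  u ord0 j - (w ord0 j)^-1 * \sum_(i | i != j) w ord0 i * ((k i)%:R * s - K).
Let len (i : 'I_d) : R := if i == j then 2 * (L * s) else 2 * K.
Let base (k : grid) (i : 'I_d) : R := if i == j then center k - L * s else u ord0 i - K.
Let cell_lo (k : grid) : 'rV[R]_d := \row_i (base k i + (k i)%:R * (len i / n.+1%:R)).
Let cell_hi (k : grid) : 'rV[R]_d := \row_i (base k i + (k i).+1%:R * (len i / n.+1%:R)).

Let s_gt0 : 0 < s. Proof. by rewrite divr_gt0 ?mulr_gt0. Qed.

Let len_gt0 i : 0 < len i.
Proof.
by rewrite /len; case: eqP => _; apply: mulr_gt0 => //; exact: mulr_gt0 L_gt0 s_gt0.
Qed.

Lemma center_dist z (k : grid) : dotv w (z - u) = 0 ->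
  (forall i, i != j -> `|z ord0 i - (u ord0 i - K + (k i)%:R * s)| <= s) ->
  `|z ord0 j - center k| <= L * s.
Proof.
move=> wz zk.
have wzj : \sum_(i | i != j) w ord0 i * (z ord0 i - u ord0 i) =
    - (w ord0 j * (z ord0 j - u ord0 j)).
  apply/eqP; rewrite -addr_eq0 addrC; apply/eqP.
  rewrite -[RHS]wz /dotv [RHS](bigD1 j) //= !mxE.
  by congr (_ + _); apply: eq_bigr => i _; rewrite !mxE.
have -> : z ord0 j - center k =
    - (w ord0 j)^-1 * \sum_(i | i != j) w ord0 i * (z ord0 i - (u ord0 i - K + (k i)%:R * s)).
  have -> : \sum_(i | i != j) w ord0 i * (z ord0 i - (u ord0 i - K + (k i)%:R * s)) =
      \sum_(i | i != j) w ord0 i * (z ord0 i - u ord0 i) -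
      \sum_(i | i != j) w ord0 i * ((k i)%:R * s - K).
    by rewrite -sumrB; apply: eq_bigr => i _; ring.
  by rewrite wzj /center; field.
rewrite normrM normrN normfV mulrC /L mulrAC ler_pM2r ?invr_gt0 ?normr_gt0 //.
apply: le_trans (ler_norm_sum _ _ _) _.
apply: le_trans (_ : \sum_(i | i != j) `|w ord0 i| * s <= _).
  by apply: ler_sum => i ij; rewrite normrM ler_wpM2l // zk.
by rewrite -mulr_suml ler_wpM2r ?(ltW s_gt0) // [leRHS](bigD1 j) //= lerDr.
Qed.

Lemma grid_cover z : cube u K z -> dotv w (z - u) = 0 ->
  exists k : grid, box (cell_lo k) (cell_hi k) z.
Proof.
move=> zK wz.
have /choice[f fP] : forall i, exists c : 'I_n.+1, i != j ->
    u ord0 i - K + c%:R * s <= z ord0 i <= u ord0 i - K + c.+1%:R * s.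
  move=> i; have zi : u ord0 i - K <= z ord0 i <= u ord0 i - K + 2 * K.
    by have := zK i; rewrite ler_norml; lra.
  by have [c zc] := grid_cell n (mulr_gt0 (ltr0Sn _ 1) K0) zi; exists c.
have zj : `|z ord0 j - center (finfun f)| <= L * s.
  apply: center_dist => // i /fP /andP[lo hi]; rewrite ffunE ler_norml.
  by apply/andP; split; rewrite -natr1 mulrDl mul1r in hi; lra.
have zj' : center (finfun f) - L * s <= z ord0 j <= center (finfun f) - L * s + len j.
  by move: zj; rewrite /len eqxx ler_norml; lra.
have [cj zcj] := grid_cell n (len_gt0 j) zj'.
pose k : grid := [ffun i => if i == j then cj else f i].
have ck : center k = center (finfun f).
  by congr (_ - _ * _); apply: eq_bigr => i /negPf ij; rewrite !ffunE ij.
exists k => i; rewrite !mxE /base ffunE.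
case: (eqVneq i j) => [->|ij]; first by rewrite ck.
by rewrite /len (negPf ij); exact: fP.
Qed.

Lemma grid_volume :
  \sum_(k : grid) box_vol (cell_lo k) (cell_hi k) = 4 * L * K * C / n.+1%:R.
Proof.
have cellE k : box_vol (cell_lo k) (cell_hi k) = \prod_i (len i / n.+1%:R).
  by apply: eq_bigr => i _; rewrite !mxE -natr1; ring.
rewrite (eq_bigr _ (fun k _ => cellE k)).
rewrite -(bigA_distr_bigA (fun i (_ : 'I_n.+1) => len i / n.+1%:R)) /=.
under eq_bigr do rewrite sumr_const card_ord -[_ / _ *+ _]mulr_natr divfK ?pnatr_eq0 //.
rewrite (bigD1 j) //= /len eqxx (eq_bigr (fun=> 2 * K)) => [|i /negPf -> //].
by rewrite /C /s; ring.
Qed.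

Lemma hyperplane_grid_cover : exists a b : grid -> 'rV[R]_d,
  [/\ forall k i, a k ord0 i <= b k ord0 i,
      cube u K `&` [set z | dotv w (z - u) = 0] `<=` \bigcup_k box (a k) (b k) &
      \sum_k box_vol (a k) (b k) = 4 * L * K * C / n.+1%:R].
Proof.
exists cell_lo, cell_hi; split; last exact: grid_volume.
- move=> k i; rewrite !mxE lerD2l ler_wpM2r ?ler_nat //.
  by rewrite divr_ge0 // ltW.
- by move=> z [zK wz]; have [k zk] := grid_cover zK wz; exists k.
Qed.

End grid.

Lemma lebesgue_null_hyperplane_cube :
  lebesgue_null (cube u K `&` [set z | dotv w (z - u) = 0]).
Proof.
move=> e e0.
have [a [b [ab cover vol]]] := hyperplane_grid_cover (Num.Def.truncn (4 * L * K * C / e)).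
apply: (finite_box_cover_seq (leq_ltn_trans (leq0n _) (ltn_ord j)) ab cover).
rewrite vol ler_pdivrMr ?ltr0Sn //; apply/ltW.
by rewrite -ltr_pdivrMl // mulrC truncnS_gt.
Qed.

End hyperplane_null.

Section depth_margin.
Variables (R : realType) (d : nat).
Implicit Types (mu : probability (Rd R d) R) (u v w : 'rV[R]_d).

Lemma measurable_cube c K : measurable (cube c K : set (Rd R d)).
Proof. by apply: closed_measurable; exact: closed_cube. Qed.

Lemma measurable_halfspace w u b : measurable (halfspace w u b : set (Rd R d)).
Proof. by apply: closed_measurable; exact: closed_halfspace. Qed.

Lemma measurable_cube_halfspace u w K b :
  measurable (cube u K `&` halfspace w u b : set (Rd R d)).
Proof. exact: measurableI (measurable_cube _ _) (measurable_halfspace _ _ _). Qed.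

Lemma pr_cube_gt mu c eta : 0 < eta -> exists K, 0 < K /\ 1 - eta < pr mu (cube c K).
Proof.
move=> eta0; pose F n : set (Rd R d) := cube c n.+1%:R.
have ndF : nondecreasing_seq F.
  move=> m n mn; apply/subsetPset => z zm i.
  by apply: le_trans (zm i) _; rewrite ler_nat.
have FT : \bigcup_n F n = setT.
  apply/seteqP; split => // z _.
  exists (Num.Def.truncn (\sum_i `|z ord0 i - c ord0 i|)) => // i.
  by apply: le_trans (ltW (truncnS_gt _)); rewrite (bigD1 i) //= lerDl sumr_ge0.
have mF n : measurable (F n) by exact: measurable_cube.
have [|n Fn] := pr_bigcup_gt (mu := mu) (b := 1 - eta) mF ndF.
  by rewrite FT probability_setT /=; lra.
by exists n.+1%:R.
Qed.

Lemma exists_coord_neq0 w : w != 0 -> exists j, w ord0 j != 0.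
Proof.
move=> w0; apply/not_existsP => wj0; apply/(negP w0)/eqP/rowP => j.
by rewrite mxE; apply/eqP/negPn/negP/wj0.
Qed.

Lemma pr_cube_halfspace_gt mu u w K b : abs_cont mu -> 0 < K -> w != 0 ->
  b < pr mu (cube u K `&` halfspace w u 0) ->
  exists n, b < pr mu (cube u K `&` halfspace w u n.+1%:R^-1).
Proof.
(* The halfspace is the union of the increasing strict halfspaces and of the hyperplane,
   which is mu-null. *)
move=> ac K0 /exists_coord_neq0[j wj0] hb.
pose L : set (Rd R d) := cube u K `&` [set z | dotv w (z - u) = 0].
have mL : measurable L.
  by apply: closed_measurable; apply: closedI; [exact: closed_cube | exact: closed_hyperplane].
have L0 : mu L = 0%E := ac L mL (lebesgue_null_hyperplane_cube u K0 wj0).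
pose F n : set (Rd R d) := cube u K `&` halfspace w u n.+1%:R^-1.
have ndF : nondecreasing_seq F.
  move=> m n mn; apply/subsetPset => z [zK zH]; split => //; apply: le_trans zH.
  by rewrite lef_pV2 ?posrE // ler_nat.
have mF n : measurable (F n) by exact: measurable_cube_halfspace.
apply: pr_bigcup_gt => //; apply: (lt_le_trans hb).
apply: le_trans (_ : pr mu ((\bigcup_n F n) `|` L) <= _).
  apply: le_pr => //; first exact: measurable_cube_halfspace.
    by apply: measurableU => //; exact: bigcupT_measurable.
  move=> z [zK]; rewrite /halfspace /= le_eqVlt => /orP[/eqP wz|wz]; [right|left] => //.
  exists (Num.Def.truncn (dotv w (z - u))^-1) => //; split => //.
  rewrite /halfspace /= -[leRHS]invrK lef_pV2 ?posrE ?invr_gt0 //.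
  exact/ltW/truncnS_gt.
apply: le_trans (pr_setU_le _ _ _) _ => //; first exact: bigcupT_measurable.
by rewrite L0 addr0.
Qed.

Lemma halfspace_perturb u w v K r g g' : (forall i, `|v ord0 i - w ord0 i| <= r) ->
  d%:R * (r * K) <= g - g' -> cube u K `&` halfspace w u g `<=` halfspace v u g'.
Proof.
move=> vw gg' z [zK zH].
have : `|dotv (v - w) (z - u)| <= d%:R * (r * K).
  by apply: normr_dotv_le => i; rewrite !mxE; [exact: vw | exact: zK].
by rewrite dotvBl ler_norml => /andP[+ _]; rewrite /halfspace /= in zH *; lra.
Qed.

Lemma pr_cube_halfspace_uniform_gt mu u K b : abs_cont mu -> 0 < K ->
  (forall w, dotv w w = 1 -> b < pr mu (cube u K `&` halfspace w u 0)) ->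
  exists del, 0 < del /\
    forall v, dotv v v = 1 -> b < pr mu (cube u K `&` halfspace v u del).
Proof.
(* A margin 1 / m.+1 found for w survives, halved, for all v near w (halfspace_perturb);
   compactness of the unit sphere makes the margin uniform. *)
move=> ac K0 hb; pose P n v := b < pr mu (cube u K `&` halfspace v u n.+1%:R^-1).
have /compact_near_coveringP cover := @compact_unit_sphere R d.
suff near_P w : dotv w w = 1 -> \forall v \near w & n \near \oo, P n v.
  have [N _ PN] := cover nat \oo P _ near_P.
  exists N.+1%:R^-1; split => [|v vv]; first by rewrite invr_gt0.
  by apply: (PN N); rewrite /= ?leqnn ?lexx.
move=> ww; have w0 : w != 0.
  apply: contra_eq_neq ww => ->; rewrite /dotv big1 => [|i _]; last by rewrite mxE mul0r.
  by rewrite eq_sym oner_eq0.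
have [m Pm] := pr_cube_halfspace_gt ac K0 w0 (hb w ww).
set g : R := m.+1%:R^-1; set r := g / (2 * (d%:R * K + 1)).
have g0 : 0 < g by rewrite invr_gt0.
have dK0 : 0 <= d%:R * K by rewrite mulr_ge0 // ltW.
exists (ball w r, [set n | (2 * m.+1 <= n)%N]).
  split; first by apply: nbhsx_ballx; rewrite divr_gt0 // mulr_gt0 // ltr_wpDl.
  by exists (2 * m.+1)%N.
move=> [v n] /= [[_ vw] mn]; apply: (lt_le_trans Pm); apply: le_pr.
- exact: measurable_cube_halfspace.
- exact: measurable_cube_halfspace.
move=> z zKH; split; first by case: zKH.
apply: (halfspace_perturb (r := r) (g := g)) zKH => [i|].
  by have := vw ord0 i; rewrite /ball /= distrC => /ltW.
have rK : d%:R * (r * K) <= g / 2.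
  have -> : d%:R * (r * K) = g / 2 * (d%:R * K / (d%:R * K + 1)).
    by rewrite /r; field; rewrite gt_eqF // ltr_wpDl.
  by rewrite ger_pMr ?divr_gt0 // ler_pdivrMr ?ltr_wpDl //; lra.
have ng : n.+1%:R^-1 <= g / 2.
  rewrite /g -invfM lef_pV2 ?posrE ?mulr_gt0 // -natrM ler_nat mulnC.
  exact: leq_trans mn _.
apply: le_trans rK _; rewrite lerBrDr -lerBrDl; apply: le_trans ng _.
by rewrite {2}(splitr g) addrK.
Qed.

End depth_margin.

Section transport_bound.
Variables (R : realType) (d : nat).
Implicit Types (mu nu P : probability (Rd R d) R) (u v x : 'rV[R]_d).

Lemma TD_gt_halfspace (mu : set (Rd R d) -> \bar R) u eps : (eps%:E < TD mu u)%E ->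
  exists tau, eps < tau /\
    forall v, dotv v v = 1 -> (tau%:E <= mu (halfspace v u 0))%E.
Proof.
(* TD mu u = +oo when d = 0, as there are no unit vectors. *)
have TD_le v : dotv v v = 1 -> (TD mu u <= mu (halfspace v u 0))%E.
  by move=> vv; apply: ereal_inf_lbound; exists v => //; apply/enorm_eq1.
move: TD_le; case: (TD mu u) => [t| |] // TD_le.
  by rewrite lte_fin => eps_t; exists t.
move=> _; exists (eps + 1); split => [|v vv]; first lra.
by move: (TD_le v vv); rewrite leye_eq => /eqP ->; rewrite leey.
Qed.

Lemma depth_margin mu u tau eta : abs_cont mu -> 0 < eta ->
  (forall v, dotv v v = 1 -> (tau%:E <= mu (halfspace v u 0))%E) ->
  exists K del, [/\ 0 < K, 0 < del &
    forall v, dotv v v = 1 -> tau - eta < pr mu (cube u K `&` halfspace v u del)].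
Proof.
move=> ac eta0 tauH; have [K [K0 cubeK]] := pr_cube_gt mu u eta0.
suff [del [del0 margin]] : exists del, 0 < del /\
    forall v, dotv v v = 1 -> tau - eta < pr mu (cube u K `&` halfspace v u del).
  by exists K, del.
apply: pr_cube_halfspace_uniform_gt => // w ww.
have mC := measurable_cube u K; have mH := measurable_halfspace w u 0.
have : pr mu (halfspace w u 0) <= pr mu (cube u K `&` halfspace w u 0) + pr mu (~` cube u K).
  apply: le_trans (pr_setU_le _ _ _) => //; last exact: measurableC.
    apply: le_pr => //; first by apply: measurableU; [exact: measurableI | exact: measurableC].
    by move=> z Hz; case: (pselect (cube u K z)) => zK; [left | right].
  exact: measurableI.
by have := tauH w ww; rewrite pr_setC // (probabilityE mu mH) lee_fin; lra.
Qed.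

Lemma pr_Qeps_le nu P eps B : 0 <= eps -> in_Qeps eps P nu -> measurable B ->
  pr nu B <= pr P B + eps.
Proof.
move=> eps0 [_ [Q nuE]] mB.
rewrite nuE // (probabilityE P mB) (probabilityE Q mB) -EFinB -EFinM -EFinD /=.
by have := pr_le1 Q mB; have := pr_ge0 P mB; nra.
Qed.

Lemma pr_halfspace_le_transport_tail mu nu psi u x K Rc c :
  convex_ext psi -> subdiff psi u x -> grad_pushforward mu nu psi ->
  d%:R * (Rc * K) < c ->
  pr mu (cube u K `&` halfspace x u c) <= pr nu (~` cube 0 Rc).
Proof.
move=> cvx xu [T [mT [[N [mN [muN gradN]]] push]]] RcK.
have mB : measurable (~` cube 0 Rc : set (Rd R d)).
  by apply: measurableC; exact: measurable_cube.
have mTB : measurable (T @^-1` ~` cube 0 Rc).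
  by rewrite -[X in measurable X]setTI; exact: mT.
rewrite push //; apply: le_trans (_ : pr mu ((T @^-1` ~` cube 0 Rc) `|` N) <= _).
  apply: le_pr; [exact: measurable_cube_halfspace | exact: measurableU mTB mN |].
  move=> z [zK zH]; case: (pselect (N z)) => [|nNz]; [by right | left => /= TzRc].
  have := subdiff_le_gradient cvx xu (gradN z nNz).
  have : `|dotv (T z) (z - u)| <= d%:R * (Rc * K).
    apply: normr_dotv_le => i; last by rewrite !mxE; exact: zK.
    by have := TzRc i; rewrite mxE subr0.
  by rewrite /halfspace /= in zH; rewrite ler_norml; lra.
by apply: le_trans (pr_setU_le _ _ _) _ => //; rewrite muN addr0.
Qed.

Lemma enorm_le_transport_tail mu nu psi u x K del Rc b :
  convex_ext psi -> subdiff psi u x -> grad_pushforward mu nu psi ->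
  0 < K -> 0 < del -> 0 < Rc ->
  (forall v, dotv v v = 1 -> b < pr mu (cube u K `&` halfspace v u del)) ->
  pr nu (~` cube 0 Rc) <= b -> enorm x <= d%:R * (Rc * K) / del.
Proof.
move=> cvx xu push K0 del0 Rc0 margin tail; rewrite leNgt; apply/negP => x_big.
have x0 : 0 < enorm x.
  by apply: le_lt_trans x_big; rewrite divr_ge0 ?mulr_ge0 // ltW.
pose v := (enorm x)^-1 *: x.
have vv : dotv v v = 1.
  by rewrite dotvv enormZ ger0_norm ?invr_ge0 ?ltW // mulVf ?gt_eqF // expr1n.
have sub_x : cube u K `&` halfspace v u del `<=` cube u K `&` halfspace x u (del * enorm x).
  move=> z [zK zH]; split => //; rewrite /halfspace /= in zH *.
  by rewrite -[X in dotv X _](scalerKV (lt0r_neq0 x0)) dotvZl mulrC ler_pM2l.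
have RcK : d%:R * (Rc * K) < del * enorm x by rewrite -ltr_pdivrMl // mulrC.
have := pr_halfspace_le_transport_tail cvx xu push RcK.
have := le_pr mu (measurable_cube_halfspace _ _ _ _) (measurable_cube_halfspace _ _ _ _) sub_x.
by have := margin v vv; lra.
Qed.

End transport_bound.

Theorem mainTheorem8 (R : realType) (d : nat)
    (mu P : probability (Rd R d) R) (u : 'rV[R]_d) :
  abs_cont mu -> abs_cont P ->
  (0 < TD mu u)%E ->
  forall eps : R, 0 <= eps -> (eps%:E < TD mu u)%E ->
  exists Rad : R, 0 < Rad /\
    forall psi : 'rV[R]_d -> \bar R, in_Gamma eps mu P psi ->
      forall x : 'rV[R]_d, subdiff psi u x -> enorm x <= Rad.
Proof.
move=> acmu _ _ eps eps0 /TD_gt_halfspace[tau [eps_tau tauH]].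
pose eta := (tau - eps) / 3; have eta0 : 0 < eta by rewrite divr_gt0 // subr_gt0.
have [K [del [K0 del0 margin]]] := depth_margin acmu eta0 tauH.
have [Rc [Rc0 cubeP]] := pr_cube_gt P 0 eta0.
exists (d%:R * (Rc * K) / del + 1); split.
  by rewrite ltr_wpDl // divr_ge0 ?mulr_ge0 // ltW.
move=> psi [cvx [_ [nu [Qnu push]]]] x xu.
apply: (@le_trans _ _ (d%:R * (Rc * K) / del)); last by rewrite lerDl.
apply: enorm_le_transport_tail cvx xu push K0 del0 Rc0 margin _.
have mC := measurable_cube (0 : 'rV[R]_d) Rc.
have := pr_Qeps_le eps0 Qnu (measurableC mC); rewrite (pr_setC P) //.
have : 3 * eta = tau - eps by rewrite mulrC divfK.
lra.
Qed.
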